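(* Let $M$ be a mechanism for a combinatorial auction setting with item set $[m]$, and let $V,V'$ be classes of valuations on $2^{[m]}$. If $M$ is $(\lambda,\mu)$-smooth for the class $V'$ and $V$ is pointwise $\beta$-approximated by $V'$ (for some $\beta\ge1$), then $M$ is $(\lambda/\beta,\mu)$-smooth for the class $V$.
   Context: In a mechanism, each bidder $i$ chooses a strategy $b_i$; the outcome of a strategy profile $b$ gives $i$ a set $S_i(b)$ (the sets being disjoint) and a payment $P_i(b)$, with quasi-linear utility $u_i(b;v_i)=v_i(S_i(b))-P_i(b)$. $SW(\mathrm{OPT}(v))=\max\{\sum_iv_i(S_i):(S_i)\text{ a partition of }[m]\}$. A mechanism is $(\lambda,\mu)$-smooth for a valuation class $V$ if for every valuation profile $v$ with all $v_i\in V$ there exist deviation mappings $b_i'$ from strategies of $i$ to strategies of $i$ (depending on $v$) such that for every strategy profile $b$: $\sum_iu_i(b_i'(b_i),b_{-i};v_i)\ge\lambda SW(\mathrm{OPT}(v))-\mu\sum_iP_i(b)$. A valuation class $V$ is pointwise $\beta$-approximated by a class $V'$ if for every $v\in V$ and every $S\subseteq[m]$ there exists $v'\in V'$ (which may depend on $S$) with $\beta v'(S)\ge v(S)$ and $v(T)\ge v'(T)$ for all $T\subseteq[m]$. *)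

From HB Require Import structures.
From mathcomp Require Import all_boot all_order all_algebra.
Set Implicit Arguments. Unset Strict Implicit. Unset Printing Implicit Defensive.
Import Order.TTheory GRing.Theory Num.Theory.
Local Open Scope ring_scope.

Definition valuation (R : realFieldType) (m : nat) := {set 'I_m} -> R.

(* A mechanism for n bidders and m items: bidder i has strategy space B i;
   a strategy profile b : forall i, B i yields disjoint sets S_i(b) and
   payments P_i(b). *)
Record mechanism (R : realFieldType) (n m : nat) (B : 'I_n -> Type) := Mechanism {
  alloc : (forall i, B i) -> 'I_n -> {set 'I_m};
  pay   : (forall i, B i) -> 'I_n -> R;
  alloc_disjoint : forall b (i j : 'I_n), i != j -> [disjoint alloc b i & alloc b j]
}.

Definition utility R n m B (M : @mechanism R n m B) (b : forall i, B i)
  (i : 'I_n) (vi : valuation R m) : R :=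
  vi (alloc M b i) - pay M b i.

(* Social welfare of the partition of [m] given by assigning each item
   to a bidder (part S_i = items assigned to i). *)
Definition part_sw R n m (v : 'I_n -> valuation R m) (f : {ffun 'I_m -> 'I_n}) : R :=
  \sum_(i < n) v i [set j | f j == i].

(* SW(OPT(v)) = max over partitions of [m] into n labelled parts.
   If there is no partition at all (n = 0 < m) we set it to 0. *)
Definition sw_opt R n m (v : 'I_n -> valuation R m) : R :=
  match [pick f : {ffun 'I_m -> 'I_n}] with
  | Some f0 => \big[Num.max/part_sw v f0]_(f : {ffun 'I_m -> 'I_n}) part_sw v f
  | None => 0
  end.

Definition smooth R n m B (M : @mechanism R n m B)
  (V : valuation R m -> Prop) (lam mu : R) : Prop :=
  forall v : 'I_n -> valuation R m, (forall i, V (v i)) ->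
  exists b' : forall i, B i -> B i,
  forall b : forall i, B i,
    \sum_(i < n) utility M (dfwith b (b' i (b i))) i (v i)
      >= lam * sw_opt v - mu * \sum_(i < n) pay M b i.

Definition pointwise_approx R m (V V' : valuation R m -> Prop) (beta : R) : Prop :=
  forall v, V v -> forall S : {set 'I_m},
  exists v', V' v' /\ beta * v' S >= v S /\ (forall T, v T >= v' T).

(* Let v be a profile of valuations in V.  The optimal welfare SW(OPT(v)) is
   realised by one partition (S_i)_i of the items (or is 0 when there is no
   partition at all).  Pointwise approximation, applied to each v_i at its
   optimal bundle S_i, yields a profile v' in V' with v'_i <= v_i everywhere
   and v_i(S_i) <= beta * v'_i(S_i); hence SW(OPT(v)) <= beta * SW(OPT(v')).
   Using the deviations that witness smoothness of M for v', and the fact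
   that utilities are monotone in the valuation,
     sum_i u_i(b_i', b_-i; v_i) >= sum_i u_i(b_i', b_-i; v'_i)
                                >= lam SW(OPT(v')) - mu sum_i P_i(b)
                                >= (lam/beta) SW(OPT(v)) - mu sum_i P_i(b). *)
From HB Require Import structures.
From mathcomp Require Import all_boot all_order all_algebra.
From Stdlib Require Import IndefiniteDescription.
Set Implicit Arguments. Unset Strict Implicit. Unset Printing Implicit Defensive.
Import Order.TTheory GRing.Theory Num.Theory.
Local Open Scope ring_scope.

Section OptimalWelfare.
Variables (R : realFieldType) (n m : nat).
Implicit Types (v : 'I_n -> valuation R m) (f : {ffun 'I_m -> 'I_n}).

Definition bundle f (i : 'I_n) : {set 'I_m} := [set j | f j == i].

Lemma part_sw_le_sw_opt v f : part_sw v f <= sw_opt v.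
Proof.
rewrite /sw_opt; case: pickP => [f0 _|/(_ f)//].
exact: le_bigmax.
Qed.

Lemma sw_opt_attained v f0 : exists f, sw_opt v = part_sw v f.
Proof.
rewrite /sw_opt; case: pickP => [f1 _|/(_ f0)//].
elim/big_ind: _ => [|x y [fx ->] [fy ->]|f _]; [by exists f1| |by exists f].
by case: (leP (part_sw v fx) (part_sw v fy)); [exists fy | exists fx].
Qed.

Lemma sw_opt_no_partition v :
  (forall f : {ffun 'I_m -> 'I_n}, False) -> sw_opt v = 0.
Proof. by move=> none; rewrite /sw_opt; case: pickP => // f; case: (none f). Qed.

Lemma sw_opt_witness v : exists S : 'I_n -> {set 'I_m},
  forall (beta : R) v', 0 <= beta ->
  (forall i, v i (S i) <= beta * v' i (S i)) -> sw_opt v <= beta * sw_opt v'.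
Proof.
case: (pickP (predT : pred {ffun 'I_m -> 'I_n})) => [f0 _|none]; last first.
  exists (fun=> set0) => beta v' _ _.
  by rewrite !sw_opt_no_partition ?mulr0 // => f; move: (none f).
have [f ->] := sw_opt_attained v f0.
exists (bundle f) => beta v' beta0 dom.
apply: le_trans (ler_wpM2l beta0 (part_sw_le_sw_opt v' f)).
by rewrite /part_sw mulr_sumr; apply: ler_sum => i _; exact: dom.
Qed.
End OptimalWelfare.

Lemma approx_profile (R : realFieldType) (n m : nat)
    (V V' : valuation R m -> Prop) (beta : R) (v : 'I_n -> valuation R m)
    (S : 'I_n -> {set 'I_m}) :
  pointwise_approx V V' beta -> (forall i, V (v i)) ->
  exists v' : 'I_n -> valuation R m, forall i,
    [/\ V' (v' i), v i (S i) <= beta * v' i (S i) & forall T, v' i T <= v i T].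
Proof.
move=> approx Vv; apply: (functional_choice (fun i vi' =>
  [/\ V' vi', v i (S i) <= beta * vi' (S i) & forall T, vi' T <= v i T])) => i.
have [vi' [V'vi' [scaled dom]]] := approx _ (Vv i) (S i).
by exists vi'; split.
Qed.

Lemma utility_mono (R : realFieldType) (n m : nat) (B : 'I_n -> Type)
    (M : @mechanism R n m B) (b : forall i, B i) (i : 'I_n)
    (vi vi' : valuation R m) :
  (forall T, vi' T <= vi T) -> utility M b i vi' <= utility M b i vi.
Proof. by move=> dom; rewrite /utility lerD2r. Qed.

Lemma scaled_welfare_le (R : realFieldType) (lam beta W W' : R) :
  0 <= lam -> 0 < beta -> W <= beta * W' -> lam / beta * W <= lam * W'.
Proof.
move=> lam0 beta0 le_W; rewrite mulrAC -mulrA ler_wpM2l //.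
by rewrite ler_pdivrMr // mulrC.
Qed.

Theorem mainTheorem11 (R : realFieldType) (n m : nat) (B : 'I_n -> Type)
  (M : @mechanism R n m B) (V V' : valuation R m -> Prop) (lam mu beta : R) :
  0 <= lam -> 1 <= beta ->
  smooth M V' lam mu -> pointwise_approx V V' beta ->
  smooth M V (lam / beta) mu.
Proof.
move=> lam0 beta1 smoothV' approx v Vv.
have beta0 : 0 < beta by apply: lt_le_trans beta1.
have [S opt_bound] := sw_opt_witness v.
have [v' v'P] := approx_profile S approx Vv.
have V'v' : forall i, V' (v' i) by move=> i; case: (v'P i).
have [b' devV'] := smoothV' v' V'v'.
have sw_le : sw_opt v <= beta * sw_opt v'.
  by apply: opt_bound (ltW beta0) _ => i; case: (v'P i).
exists b' => b; apply: le_trans (le_trans _ (devV' b)) _.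
  by rewrite lerD2r; exact: scaled_welfare_le.
by apply: ler_sum => i _; apply: utility_mono; case: (v'P i).
Qed.
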